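(* Let $\ell$ and $s$ be positive integers. If a partial $(n,k,t)_\lambda$-system has an $\ell$-presequencing with $s$ classes, then it has a nondeficient $\ell$-presequencing with $s$ classes, provided that \[ n > \lambda\left(2\binom{2\ell-3}{t}-\binom{\ell-2}{t}\right)\binom{k-1}{t}^{-1}+(2s-1)(\ell-1)-1. \]
   Context: For positive integers $n,k,t,\lambda$ with $n \geq k > t \geq 2$, a partial $(n,k,t)_\lambda$-system is a pair $(X,\mathcal{B})$ where $X$ is an $n$-set of vertices and $\mathcal{B}$ is a collection of $k$-subsets of $X$ (blocks) such that each $t$-subset of $X$ is contained in at most $\lambda$ blocks. An independent set is a subset of $X$ containing no block. An $\ell$-buffered set is a triple $(S,S^{L},S^{R})$ with $S^{L},S^{R}\subseteq S$ (buffers) such that: (B1) if $|S|\le \ell-2$ then $S^{L}=S^{R}=S$; (B2) if $\ell-1\le |S|\le 2\ell-2$ then $|S^{L}|=|S^{R}|=\ell-1$ and $S^{L}\cup S^{R}=S$; (B3) if $|S|\ge 2\ell-1$ then $|S^{L}|=|S^{R}|=\ell-1$ and $S^{L}\cap S^{R}=\emptyset$. It is deficient if $|S|\le \ell-2$ and nondeficient otherwise. An $\ell$-presequencing of $(X,\mathcal{B})$ is a tuple $(X_0,\ldots,X_{s-1})$ of $\ell$-buffered sets (classes) whose underlying sets partition $X$, such that (P1) each $X_i$ is independent, and (P2) for each $i\in\mathbb{Z}_s$, $X_i^{R}\cup X_{i+1}^{L}$ is independent (indices mod $s$). It is nondeficient if every class is nondeficient. Binomial coefficients $\binom{a}{t}$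 with $0\le a<t$ equal $0$. *)

From mathcomp Require Import all_boot all_order all_algebra.
Set Implicit Arguments. Unset Strict Implicit. Unset Printing Implicit Defensive.

Section Defs.
Variable X : finType.

Definition partial_system (n k t lam : nat) (B : {set {set X}}) : Prop :=
  #|X| = n /\
  (forall b, b \in B -> #|b| = k) /\
  (forall T : {set X}, #|T| = t -> #|[set b in B | T \subset b]| <= lam).

Definition independent (B : {set {set X}}) (A : {set X}) : Prop :=
  forall b, b \in B -> ~~ (b \subset A).

(* (S, SL, SR) is an l-buffered set.  Integer inequalities are written
   without truncated subtraction: |S| <= l-2  <->  |S|+2 <= l, etc. *)
Definition buffered (l : nat) (S SL SR : {set X}) : Prop :=
  SL \subset S /\ SR \subset S /\
  (#|S| + 2 <= l -> SL = S /\ SR = S) /\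
  (l <= #|S| + 1 -> #|S| + 2 <= 2 * l ->
     #|SL| + 1 = l /\ #|SR| + 1 = l /\ SL :|: SR = S) /\
  (2 * l <= #|S| + 1 ->
     #|SL| + 1 = l /\ #|SR| + 1 = l /\ [disjoint SL & SR]).

Definition deficient (l : nat) (S : {set X}) : bool := #|S| + 2 <= l.

Definition presequencing (l s : nat) (B : {set {set X}})
  (S SL SR : 'I_s -> {set X}) : Prop :=
  (forall i, buffered l (S i) (SL i) (SR i)) /\
  (forall i j, i != j -> [disjoint S i & S j]) /\
  (\bigcup_(i < s) S i = [set: X]) /\
  (forall i, independent B (S i)) /\
  (forall i, independent B (SR i :|: SL (@ordS s i))).

Definition nondeficient_presequencing (l s : nat) (B : {set {set X}})
  (S SL SR : 'I_s -> {set X}) : Prop :=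
  @presequencing l s B S SL SR /\ (forall i, ~~ deficient l (S i)).

End Defs.

Arguments presequencing {X} l s B S SL SR.
Arguments nondeficient_presequencing {X} l s B S SL SR.

From mathcomp Require Import all_boot all_order all_algebra.
From mathcomp Require Import zify lra.
Import GRing.Theory Num.Theory.

Set Implicit Arguments.
Unset Strict Implicit.
Unset Printing Implicit Defensive.

(* Enlarge a deficient class X_i by a vertex x lying in no buffer, letting
   x |: X_i be its own two buffers.  A class losing x had size >= 2l - 1 (x is
   outside its buffers), so it stays buffered and nondeficient.  The only new
   constraints are that x |: (X_{i-1}^R :|: X_i) and x |: (X_i :|: X_{i+1}^L)
   contain no block.  Buffers cover at most (l-2) + 2(s-1)(l-1) vertices.  A
   vertex violating a constraint is the only vertex outside X_{i-1}^R, X_i,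
   X_{i+1}^L of a block with k-1 vertices in one of the two sets; double
   counting pairs (block, t-subset) bounds the number of such vertices by
   lam (2 C(2l-3,t) - C(l-2,t)) / C(k-1,t).  The bound on n leaves a suitable
   x, and the total deficiency sum_j (l-1-|X_j|) strictly decreases. *)

Lemma leq_bin_increment m t c y :
  c <= y -> 'C(c + m, t) - 'C(c, t) <= 'C(y + m, t) - 'C(y, t).
Proof.
apply: (@homo_leq _ (fun c => 'C(c + m, t) - 'C(c, t)) leq leqnn leq_trans).
move=> {}c; case: t => [|t]; first by rewrite !bin0.
rewrite addSn !binS.
have := leq_bin2l t (leq_addr m c); have := leq_bin2l t.+1 (leq_addr m c).
lia.
Qed.

Lemma leq_bin_budget t u v a1 a2 c :
  a1 <= u + v -> a2 <= c + v -> c <= u ->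
  'C(a1, t) + 'C(a2, t) - 'C(c, t) <= 2 * 'C(u + v, t) - 'C(u, t).
Proof.
move=> le_a1 le_a2 le_cu.
have := leq_bin2l t le_a1; have := leq_bin2l t (leq_addr v u).
have := leq_trans (leq_sub2r _ (leq_bin2l t le_a2)) (leq_bin_increment v t le_cu).
lia.
Qed.

Lemma nat_lt_of_rat_bound (a c n N : nat) :
  0 < c -> (a%:R / c%:R + N%:R < n%:R :> rat)%R -> a < (n - N) * c.
Proof.
move=> c_gt0 bound.
have a_c_ge0 : (0 <= a%:R / c%:R :> rat)%R by rewrite divr_ge0 ?ler0n.
have le_Nn : N <= n by rewrite -(ler_nat rat); lra.
by rewrite -(ltr_nat rat) natrM natrB // -ltr_pdivrMr ?ltr0n //; lra.
Qed.

Lemma leq_card_bigcup (T I : finType) (P : pred I) (F : I -> {set T}) :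
  #|\bigcup_(i | P i) F i| <= \sum_(i | P i) #|F i|.
Proof.
apply: (big_ind2 (fun (A : {set T}) n => #|A| <= n)) => //; first by rewrite cards0.
by move=> A1 n1 A2 n2 le1 le2; apply: leq_trans (leq_card_setU A1 A2) (leq_add le1 le2).
Qed.

Section Blocks.
Variables (X : finType) (B : {set {set X}}) (k t lam : nat).
Implicit Types (A C Y Z b T : {set X}) (v : X).

Definition tsubsets Y := [set T : {set X} | T \subset Y & #|T| == t].

Lemma card_tsubsets Y : #|tsubsets Y| = 'C(#|Y|, t).
Proof. exact: cards_draws. Qed.

Lemma tsubsetsS Y Z : Y \subset Z -> tsubsets Y \subset tsubsets Z.
Proof.
move=> sYZ; apply/subsetP => T; rewrite !inE => /andP[sTY ->].
by rewrite (subset_trans sTY sYZ).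
Qed.

Lemma tsubsetsI b Y : tsubsets (b :&: Y) = [set T in tsubsets Y | T \subset b].
Proof. by apply/setP => T; rewrite !inE subsetI -andbA andbC. Qed.

Lemma card_tsubsetsU A1 A2 C : C \subset A1 -> C \subset A2 ->
  #|tsubsets A1 :|: tsubsets A2| <= 'C(#|A1|, t) + 'C(#|A2|, t) - 'C(#|C|, t).
Proof.
move=> sCA1 sCA2; rewrite cardsU !card_tsubsets leq_sub2l // -card_tsubsets.
by apply/subset_leq_card; rewrite subsetI !tsubsetsS.
Qed.

Lemma independentS A A' : independent B A -> A' \subset A -> independent B A'.
Proof.
by move=> indA sA'A b /indA; apply: contra => /subset_trans; apply.
Qed.

Definition completes A v := [exists b in B, b \subset v |: A].

Lemma independent_setU1 A v : ~~ completes A v -> independent B (v |: A).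
Proof. by move=> /existsPn ncA b bB; have := ncA b; rewrite bB. Qed.

Lemma completes_block A v : independent B A -> completes A v ->
  exists2 b, b \in B & b :\: A = [set v].
Proof.
move=> indA /existsP[b /andP[bB sbA]]; exists b => //; apply/eqP.
have := indA b bB; rewrite -setD_eq0.
by move: sbA; rewrite setUC -subDset subset1 => /orP[] /eqP->; rewrite ?eqxx.
Qed.

Hypothesis block_card : forall b, b \in B -> #|b| = k.
Hypothesis tset_degree : forall T, #|T| = t -> #|[set b in B | T \subset b]| <= lam.

Lemma double_count (W TT : {set {set X}}) m :
  W \subset B -> (forall T, T \in TT -> #|T| = t) ->
  (forall b, b \in W -> m <= #|[set T in TT | T \subset b]|) ->
  #|W| * m <= #|TT| * lam.
Proof.
move=> sWB TTt Wm.
have cardE (U : {set {set X}}) (P : pred {set X}) :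
    #|[set Y in U | P Y]| = \sum_(Y in U) P Y.
  by rewrite -sum1dep_card big_mkcondr.
rewrite -!sum_nat_const (@leq_trans (\sum_(b in W) \sum_(T in TT) (T \subset b))) //.
  by apply: leq_sum => b /Wm; rewrite (cardE _ (fun T => T \subset b)).
rewrite exchange_big; apply: leq_sum => T /TTt /tset_degree; apply: leq_trans.
rewrite -(cardE _ (fun b => T \subset b)); apply/subset_leq_card/subsetP => b.
by rewrite !inE => /andP[/(subsetP sWB) -> ->].
Qed.

Lemma card_completers_leq_blocks A1 A2 : independent B A1 -> independent B A2 ->
  #|[set v | (v \notin A1 :|: A2) && (completes A1 v || completes A2 v)]|
    <= #|[set b in B | (#|b :\: A1| <= 1) || (#|b :\: A2| <= 1)]|.
Proof.
move=> indA1 indA2; set W := [set b in B | _].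
have sub_bigcup : [set v | (v \notin A1 :|: A2) && (completes A1 v || completes A2 v)]
    \subset \bigcup_(b in W) (b :\: (A1 :|: A2)).
  apply/subsetP => v; rewrite inE => /andP[vA cv].
  have [b bB bA] : exists2 b, b \in B & (b :\: A1 == [set v]) || (b :\: A2 == [set v]).
    case/orP: cv => [/(completes_block indA1)|/(completes_block indA2)] [b bB eq_b];
    by exists b; rewrite // eq_b eqxx ?orbT.
  apply/bigcupP; exists b; first by rewrite inE bB; case/orP: bA => /eqP->; rewrite cards1 ?orbT.
  by rewrite inE vA; case/orP: bA => /eqP/setP/(_ v); rewrite !inE eqxx => /andP[].
apply: leq_trans (subset_leq_card sub_bigcup) _.
apply: leq_trans (leq_card_bigcup _ _) _.
rewrite -sum1_card; apply: leq_sum => b; rewrite inE => /andP[_ /orP[]] /(leq_trans _)->//;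
by apply/subset_leq_card/setDS; rewrite ?subsetUl ?subsetUr.
Qed.

Lemma bin_leq_card_tsubsets_block A1 A2 b : b \in B ->
  (#|b :\: A1| <= 1) || (#|b :\: A2| <= 1) ->
  'C(k.-1, t) <= #|[set T in tsubsets A1 :|: tsubsets A2 | T \subset b]|.
Proof.
move=> bB small.
have big Y : #|b :\: Y| <= 1 -> 'C(k.-1, t) <= #|[set T in tsubsets Y | T \subset b]|.
  move=> smallY; rewrite -tsubsetsI card_tsubsets leq_bin2l //.
  by have := cardsID Y b; rewrite (block_card bB); lia.
have sub (U : {set {set X}}) : U \subset tsubsets A1 :|: tsubsets A2 ->
    #|[set T in U | T \subset b]| <= #|[set T in tsubsets A1 :|: tsubsets A2 | T \subset b]|.
  by move=> sU; rewrite !setIdE; apply/subset_leq_card/setSI.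
by case/orP: small => /big/leq_trans->; rewrite ?sub ?subsetUl ?subsetUr.
Qed.

Lemma card_completers A1 A2 C : independent B A1 -> independent B A2 ->
  C \subset A1 -> C \subset A2 ->
  #|[set v | (v \notin A1 :|: A2) && (completes A1 v || completes A2 v)]| * 'C(k.-1, t)
    <= lam * ('C(#|A1|, t) + 'C(#|A2|, t) - 'C(#|C|, t)).
Proof.
move=> indA1 indA2 sCA1 sCA2.
apply: leq_trans (leq_mul (card_completers_leq_blocks indA1 indA2) (leqnn _)) _.
rewrite [lam * _]mulnC; apply: leq_trans _ (leq_mul (card_tsubsetsU sCA1 sCA2) (leqnn lam)).
apply: double_count.
- by apply/subsetP => b; rewrite inE => /andP[].
- by move=> T; rewrite !inE => /orP[] /andP[_ /eqP].
- by move=> b; rewrite inE => /andP[]; apply: bin_leq_card_tsubsets_block.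
Qed.

End Blocks.

Section Buffered.
Variables (X : finType) (l : nat).
Implicit Types (S SL SR : {set X}) (x : X).

Lemma buffered_card_buffers S SL SR : buffered l S SL SR -> #|SL| < l /\ #|SR| < l.
Proof.
case=> _ [_ [small [medium large]]].
have [le1|lt1] := leqP (#|S| + 2) l; first by case: (small le1) => -> ->; lia.
have [le2|lt2] := leqP (#|S| + 2) (2 * l); last by case: (large ltac:(lia)) => ? [? _]; lia.
by case: (medium ltac:(lia) le2) => ? [? _]; lia.
Qed.

Lemma buffered_deficient S SL SR :
  buffered l S SL SR -> deficient l S -> SL = S /\ SR = S.
Proof. by case=> _ [_ [small _]] /small. Qed.

Lemma buffered_setU1 S x :
  deficient l S -> x \notin S -> buffered l (x |: S) (x |: S) (x |: S).
Proof.
rewrite /deficient /buffered cardsU1 => defS -> /=.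
do 3!split=> //; split=> [? ?|?]; last by exfalso; lia.
by rewrite setUid; do !split; lia.
Qed.

Lemma buffered_large S SL SR x :
  buffered l S SL SR -> x \in S -> x \notin SL :|: SR -> 2 * l <= #|S| + 1.
Proof.
case=> _ [_ [small [medium _]]] xS; apply: contraNT; rewrite -ltnNge => lt2.
have [le1|lt1] := leqP (#|S| + 2) l; first by case: (small le1) => -> _; rewrite inE xS.
by case: (medium ltac:(lia) ltac:(lia)) => _ [_ ->].
Qed.

Lemma buffered_setD1 S SL SR x :
  buffered l S SL SR -> x \notin SL :|: SR -> buffered l (S :\ x) SL SR.
Proof.
move=> bufS xLR; have [xS|xS] := boolP (x \in S); last first.
  by rewrite (setDidPl _) // disjoint_sym disjoints1.
have large := buffered_large bufS xS xLR.
case: bufS => sLS [sRS [_ [_ /(_ large) [cL [cR dLR]]]]].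
move: xLR; rewrite inE negb_or => /andP[xL xR].
have sLSx : SL \subset S :\ x by rewrite subsetD1 sLS.
have sRSx : SR \subset S :\ x by rewrite subsetD1 sRS.
have cSx : #|S| = (#|S :\ x|).+1 by rewrite (cardsD1 x S) xS.
do 2!split=> //; split; first lia.
split=> [_ le2|]; last by [].
do 2!split=> //; apply/eqP; rewrite eqEcard subUset sLSx sRSx /=.
by rewrite cardsU (disjoint_setI0 dLR) cards0; lia.
Qed.

End Buffered.

Section MoveVertex.
Variables (X I : finType).
Implicit Types (F G : I -> {set X}) (x : X).

Definition move_to F i x j : {set X} := if j == i then x |: F j else F j :\ x.

Lemma in_move_to F i x j y :
  (y \in move_to F i x j) = if y == x then j == i else y \in F j.
Proof.
rewrite /move_to; case: (eqVneq j i) => _; case: (eqVneq y x) => [->|/negPf yx];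
by rewrite !inE ?eqxx ?yx.
Qed.

Lemma move_to_notin F i x j : j != i -> x \notin F j -> move_to F i x j = F j.
Proof.
by move=> ji xF; rewrite /move_to (negPf ji); apply/setDidPl; rewrite disjoint_sym disjoints1.
Qed.

Lemma move_to_subU F G i x j j' :
  move_to F i x j :|: move_to G i x j' \subset x |: (F j :|: G j').
Proof.
by apply/subsetP => y; rewrite !inE !in_move_to; case: eqVneq.
Qed.

Lemma move_to_disjoint F i x : (forall j j', j != j' -> [disjoint F j & F j']) ->
  forall j j', j != j' -> [disjoint move_to F i x j & move_to F i x j'].
Proof.
move=> disF j j' jj'; rewrite -setI_eq0; apply/eqP/setP => y; rewrite !inE !in_move_to.
case: eqVneq => _.
  by apply/negbTE/andP => -[/eqP ji /eqP j'i]; move: jj'; rewrite ji j'i eqxx.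
by have := disF j j' jj'; rewrite -setI_eq0 => /eqP/setP/(_ y); rewrite !inE.
Qed.

Lemma move_to_cover F i x : \bigcup_j F j = setT -> \bigcup_j move_to F i x j = setT.
Proof.
move=> covF; apply/setP => y; rewrite inE; apply/bigcupP.
have [->|yx] := eqVneq y x; first by exists i; rewrite // in_move_to !eqxx.
have /bigcupP[j _ yj] : y \in \bigcup_j F j by rewrite covF inE.
by exists j; rewrite // in_move_to (negPf yx).
Qed.

End MoveVertex.

Section Presequencing.
Variables (X : finType) (B : {set {set X}}) (l s : nat).
Implicit Types (S SL SR : 'I_s -> {set X}) (x : X).

Definition total_deficiency S := \sum_j (l.-1 - #|S j|).

Lemma card_buffers S SL SR i : (forall j, buffered l (S j) (SL j) (SR j)) ->
  deficient l (S i) -> #|\bigcup_j (SL j :|: SR j)| <= (l - 2) + 2 * (s - 1) * (l - 1).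
Proof.
move=> bufS defi; have [SLi SRi] := buffered_deficient (bufS i) defi.
apply: leq_trans (leq_card_bigcup _ _) _.
rewrite (bigD1 i) //= SLi SRi setUid leq_add //; first by move: defi; rewrite /deficient; lia.
apply: leq_trans (_ : \sum_(j | j != i) (2 * (l - 1)) <= _).
  apply: leq_sum => j _; apply: leq_trans (leq_card_setU _ _) _.
  by have [] := buffered_card_buffers (bufS j); lia.
by rewrite sum_nat_const cardC1 card_ord; nia.
Qed.

Lemma presequencing_move S SL SR i x :
  presequencing l s B S SL SR -> deficient l (S i) ->
  (forall j, x \notin SL j :|: SR j) ->
  independent B (x |: (SR (ord_pred i) :|: SL i)) ->
  independent B (x |: (SR i :|: SL (ordS i))) ->
  presequencing l s B (move_to S i x) (move_to SL i x) (move_to SR i x).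
Proof.
move=> [bufS [disS [covS [indS indP]]]] defi xLR indPi indiS.
have [SLi SRi] := buffered_deficient (bufS i) defi.
have xL j : x \notin SL j by apply: contra (xLR j); rewrite inE => ->.
have xR j : x \notin SR j by apply: contra (xLR j); rewrite inE => ->; rewrite orbT.
split; [|split; [exact: move_to_disjoint|split; [exact: move_to_cover|split]]].
- move=> j; have [->|ji] := eqVneq j i.
    by rewrite /move_to eqxx SLi SRi; apply: buffered_setU1; rewrite // -SLi.
  rewrite [move_to S _ _ _]/move_to (negPf ji) !move_to_notin //.
  exact: buffered_setD1.
- move=> j; have [->|ji] := eqVneq j i.
    apply: independentS indiS _; rewrite /move_to eqxx -SRi.
    by rewrite setUS // subsetUl.
  by apply: independentS (indS j) _; rewrite /move_to (negPf ji) subsetDl.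
- move=> j; have [->|ji] := eqVneq j i; first exact: independentS indiS (move_to_subU _ _ _ _ _ _).
  have [Sji|Sji] := eqVneq (ordS j) i; last by rewrite !move_to_notin //; apply: indP.
  have -> : j = ord_pred i by rewrite -Sji ordSK.
  apply: independentS indPi _.
  by have := move_to_subU SR SL i x (ord_pred i) (ordS (ord_pred i)); rewrite ord_predK.
Qed.

Lemma total_deficiency_move S SL SR i x :
  (forall j, buffered l (S j) (SL j) (SR j)) -> deficient l (S i) ->
  (forall j, x \notin SL j :|: SR j) ->
  total_deficiency (move_to S i x) < total_deficiency S.
Proof.
move=> bufS defi xLR; have [SLi _] := buffered_deficient (bufS i) defi.
have xSi : x \notin S i by move: (xLR i); rewrite SLi inE negb_or => /andP[].
rewrite /total_deficiency (bigD1 i) //= [X in _ < X](bigD1 i) //= -addSn leq_add //.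
  by rewrite /move_to eqxx cardsU1 xSi; move: defi; rewrite /deficient; lia.
apply: leq_sum => j ji; rewrite /move_to (negPf ji).
have [xSj|xSj] := boolP (x \in S j); last by rewrite (setDidPl _) // disjoint_sym disjoints1.
by have := buffered_large (bufS j) xSj (xLR j); rewrite (cardsD1 x (S j)) xSj; lia.
Qed.

End Presequencing.

Section Augmentation.
Variables (X : finType) (B : {set {set X}}) (k t lam l s : nat).
Hypothesis block_card : forall b, b \in B -> #|b| = k.
Hypothesis tset_degree :
  forall T : {set X}, #|T| = t -> #|[set b in B | T \subset b]| <= lam.
Hypothesis room : lam * (2 * 'C(2 * l - 3, t) - 'C(l - 2, t))
  < (#|X| - ((l - 2) + 2 * (s - 1) * (l - 1))) * 'C(k.-1, t).
Implicit Types (S SL SR : 'I_s -> {set X}).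

Lemma exists_free_vertex S SL SR i :
  presequencing l s B S SL SR -> deficient l (S i) ->
  exists x, [/\ forall j, x \notin SL j :|: SR j,
    independent B (x |: (SR (ord_pred i) :|: SL i)) &
    independent B (x |: (SR i :|: SL (ordS i)))].
Proof.
move=> [bufS [_ [_ [_ indP]]]] defi.
have [SLi SRi] := buffered_deficient (bufS i) defi.
have l_gt1 : 1 < l by move: defi; rewrite /deficient; lia.
set A1 := SR (ord_pred i) :|: SL i; set A2 := SR i :|: SL (ordS i).
set F := \bigcup_j (SL j :|: SR j).
set bad := [set v | (v \notin A1 :|: A2) && (completes B A1 v || completes B A2 v)].
have sLF j : SL j \subset F by apply: subset_trans (bigcup_sup j _); rewrite ?subsetUl.
have sRF j : SR j \subset F by apply: subset_trans (bigcup_sup j _); rewrite ?subsetUr.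
have card_bad : #|bad| * 'C(k.-1, t) <= lam * (2 * 'C(2 * l - 3, t) - 'C(l - 2, t)).
  have sSA1 : S i \subset A1 by rewrite /A1 SLi subsetUr.
  have sSA2 : S i \subset A2 by rewrite /A2 SRi subsetUl.
  have indA1 : independent B A1 by rewrite /A1 -{2}[i]ord_predK; apply: indP.
  apply: leq_trans (card_completers block_card tset_degree indA1 (indP i) sSA1 sSA2) _.
  rewrite leq_mul2l (_ : 2 * l - 3 = (l - 2) + (l - 1)); last by lia.
  have [_ cR] := buffered_card_buffers (bufS (ord_pred i)).
  have [cL' _] := buffered_card_buffers (bufS (ordS i)).
  apply/orP; right; apply: leq_bin_budget.
  - rewrite /A1; apply: leq_trans (leq_card_setU _ _) _; rewrite SLi.
    by move: defi; rewrite /deficient; lia.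
  - by rewrite /A2; apply: leq_trans (leq_card_setU _ _) _; rewrite SRi; lia.
  - by move: defi; rewrite /deficient; lia.
have [x] : exists x, x \notin F :|: bad.
  apply/existsP; rewrite -negb_forall; apply/negP => /forallP all_in.
  have : #|F :|: bad| < #|X|.
    apply: leq_ltn_trans (leq_card_setU _ _) _.
    have := leq_ltn_trans card_bad room; rewrite ltn_mul2r => /andP[_].
    have := card_buffers bufS defi; rewrite -/F; lia.
  by rewrite ltnNge; apply/negP; apply/negPn/subset_leq_card/subsetP => y _; rewrite all_in.
rewrite inE negb_or => /andP[xF xbad].
have xA : x \notin A1 :|: A2.
  by apply: contra xF; apply/subsetP; rewrite !subUset !sLF !sRF.
move: xbad; rewrite inE xA /= negb_or => /andP[ncA1 ncA2].
exists x; split; [|exact: independent_setU1..].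
by move=> j; apply: contra xF; apply: (subsetP (bigcup_sup j _)).
Qed.

Lemma exists_nondeficient S SL SR : presequencing l s B S SL SR ->
  exists S' SL' SR', nondeficient_presequencing l s B S' SL' SR'.
Proof.
have [m] := ubnP (total_deficiency l S); elim: m S SL SR => // m IH S SL SR lt_m pS.
have [/existsP[i defi]|/existsPn nodef] := boolP [exists i, deficient l (S i)]; last first.
  by exists S, SL, SR.
have [x [xLR indPi indiS]] := exists_free_vertex pS defi.
apply: (IH _ (move_to SL i x) (move_to SR i x)).
  by apply: leq_trans (total_deficiency_move pS.1 defi xLR) _; rewrite -ltnS.
exact: presequencing_move pS defi xLR indPi indiS.
Qed.

End Augmentation.

Theorem lemma6 (X : finType) (n k t lam l s : nat) (B : {set {set X}}) :
  0 < n -> 0 < k -> 0 < t -> 0 < lam -> k <= n -> t < k -> 2 <= t ->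
  0 < l -> 0 < s ->
  partial_system n k t lam B ->
  ((n%:R : rat) >
     lam%:R * (2 * ('C(2 * l - 3, t))%:R - ('C(l - 2, t))%:R)
       / ('C(k - 1, t))%:R
     + ((2 * s - 1) * (l - 1))%:R - 1)%R ->
  (exists (S SL SR : 'I_s -> {set X}), presequencing l s B S SL SR) ->
  exists (S SL SR : 'I_s -> {set X}), nondeficient_presequencing l s B S SL SR.
Proof.
move=> _ _ _ _ _ t_lt_k _ _ s_gt0 [cardX [block_card tset_degree]] bound [S [SL [SR pS]]].
have [l_le1|l_gt1] := leqP l 1.
  by exists S, SL, SR; split=> // i; rewrite /deficient -ltnNge; lia.
apply: exists_nondeficient block_card tset_degree _ _ _ _ pS.
have le_C2_C1 : 'C(l - 2, t) <= 2 * 'C(2 * l - 3, t).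
  by rewrite (leq_trans (leq_bin2l t (_ : l - 2 <= 2 * l - 3))) ?leq_pmull //; lia.
have eN : (2 * s - 1) * (l - 1) = ((l - 2) + 2 * (s - 1) * (l - 1)).+1 by nia.
rewrite cardX; apply: nat_lt_of_rat_bound; first by rewrite bin_gt0; lia.
move: bound; rewrite subn1 eN -addn1 !natrD natrM natrB // natrM; lra.
Qed.
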